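(* Let $\rho:\mathbb{N}\times\mathbb{N}\to\mathbb{N}$ be a bijection that is monotonic in the sense that $\rho(a,b)\le\rho(c,d)$ whenever $a\le c$ and $b\le d$. Define the infinite matrix $\mathbf{A}=[a(n,k)]_{n,k\ge 0}$ and infinite vectors $\mathbf{x}=[x(k)]_{k\ge0}$, $\mathbf{b}=[b(n)]_{n\ge 0}$ by $a(n,k)=c(u,v,i,j)$, $x(k)=f(i,j)$, and $b(n)=1$ if $u=v=1$, $b(n)=0$ otherwise, where $(u,v)=\rho^{-1}(n)$ and $(i,j)=\rho^{-1}(k)$. Then (i) $\mathbf{A}$ is lower-triangular with all diagonal entries equal to $1$; (ii) $\mathbf{A}\mathbf{x}=\mathbf{b}$ (each row sum $\sum_k a(n,k)x(k)$ having only finitely many nonzero terms).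
   Context: $F(m;\,n_1,n_2)$ denotes the number of lattice walks from $(0,0)$ to $(n_1,n_2)$ that always stay in the first quadrant $\{(a,b): a\ge 0,\ b\ge 0\}$ and have exactly $m$ steps, each belonging to $\{(1,0),(-1,0),(1,1),(-1,-1)\}$; by convention $F(m;\,n_1,n_2)=0$ if $m<0$, $n_1<0$ or $n_2<0$. Define $\widetilde F(m;\,n_1,0)=F(m-1;\,n_1,0)$ and $\widetilde F(m;\,0,n_2)=F(m-1;\,0,n_2)+F(m-1;\,0,n_2-1)$ for $m,n_1,n_2\ge 0$ (these agree at $n_1=n_2=0$). Define for $i,j\ge 0$: $f(i,j)=\widetilde F(i;\,0,j-i)$ if $i\le j$, and $f(i,j)=\widetilde F(j;\,i-j,0)$ if $i\ge j$. For $u,v,i,j\ge0$ define $c(u,v,i,j)=\binom{-\min\{i,j\}}{\frac{u-i}{2}}\binom{-\min\{i,j\}}{v-j-\frac{u-i}{2}}$ if $i\equiv u\pmod 2$ and $c(u,v,i,j)=0$ otherwise, where for integers $a,k$, $\binom{a}{k}=\frac{a(a-1)\cdots(a-k+1)}{k!}$ if $k\ge0$ and $\binom{a}{k}=0$ if $k<0$. *)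

From mathcomp Require Import all_boot all_order all_algebra.
Set Implicit Arguments. Unset Strict Implicit. Unset Printing Implicit Defensive.
Import Order.TTheory GRing.Theory Num.Theory.
Local Open Scope ring_scope.

Definition stepx (d : 'I_4) : int :=
  match val d with 0%N => 1 | 1%N => -1 | 2%N => 1 | _ => -1 end.
Definition stepy (d : 'I_4) : int :=
  match val d with 0%N => 0 | 1%N => 0 | 2%N => 1 | _ => -1 end.

Definition posx (s : seq 'I_4) : int := \sum_(d <- s) stepx d.
Definition posy (s : seq 'I_4) : int := \sum_(d <- s) stepy d.

Definition in_quadrant (s : seq 'I_4) : bool := (0 <= posx s) && (0 <= posy s).

(* a walk of m steps staying in the first quadrant (all prefixes, including
   the empty one and the full walk) and ending at (n1, n2) *)
Definition good_walk (m : nat) (n1 n2 : int) (w : m.-tuple 'I_4) : bool :=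
  [forall t : 'I_m.+1, in_quadrant (take t w)] &&
  (posx w == n1) && (posy w == n2).

Definition F (m n1 n2 : int) : nat :=
  if (m < 0) || (n1 < 0) || (n2 < 0) then 0%N
  else #|[set w : (`|m|%N).-tuple 'I_4 | @good_walk `|m|%N n1 n2 w]|.

(* \widetilde F(m; n1, 0) = F(m-1; n1, 0);
   \widetilde F(m; 0, n2) = F(m-1; 0, n2) + F(m-1; 0, n2-1) *)
Definition Ft_x (m n1 : nat) : nat := F (m%:Z - 1) n1%:Z 0.
Definition Ft_y (m n2 : nat) : nat := (F (m%:Z - 1) 0 n2%:Z + F (m%:Z - 1) 0 (n2%:Z - 1))%N.

Definition f (i j : nat) : nat :=
  if (i <= j)%N then Ft_y i (j - i) else Ft_x j (i - j).

Definition gbinom (a k : int) : rat :=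
  if k < 0 then 0
  else (\prod_(l < `|k|%N) (a - l%:Z)%:~R) / ((`|k|%N)`!)%:R.

Definition c (u v i j : nat) : rat :=
  if odd i == odd u then
    let h : int := ((u%:Z - i%:Z) %/ 2)%Z in
    gbinom (- (minn i j)%:Z) h * gbinom (- (minn i j)%:Z) (v%:Z - j%:Z - h)
  else 0.

Definition Amat (rhoinv : nat -> nat * nat) (n k : nat) : rat :=
  c (rhoinv n).1 (rhoinv n).2 (rhoinv k).1 (rhoinv k).2.
Definition xvec (rhoinv : nat -> nat * nat) (k : nat) : rat :=
  (f (rhoinv k).1 (rhoinv k).2)%:R.
Definition bvec (rhoinv : nat -> nat * nat) (n : nat) : rat :=
  if ((rhoinv n).1 == 1%N) && ((rhoinv n).2 == 1%N) then 1 else 0.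

(* Let W_m(p, q) count the m-step quadrant walks ending at (p, q), and let c_m be
   c with -min(i, j) replaced by -m.  For a fixed row (u, v) consider
   G_m = sum_(i, j) W_m(i - m - 1, j - m - 1) c_m(u, v, i, j);
   then G_0 = [u = v = 1] and G_u = 0.  Pascal's rule writes c_m(i, j) as the sum
   of c_(m+1) at (i, j), (i, j+1), (i+2, j+1), (i+2, j+2), which are the four
   steps read backwards.  After reindexing, G_m pairs c_(m+1)(u, v, i, j) with the
   number of (m+1)-step walks to (i - m - 2, j - m - 2) whose endpoint alone may
   leave the quadrant.  This agrees with W_(m+1) except when min(i, j) = m + 1,
   where it is exactly f(i, j); hence summing G_m - G_(m+1) over m < u gives
   sum_(i, j) c(u, v, i, j) f(i, j) = [u = v = 1].  Monotonicity of rho makes A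
   lower triangular and turns row n of A x into this sum over a box. *)

From mathcomp Require Import all_boot all_order all_algebra.
From mathcomp Require Import zify ring.
Set Implicit Arguments. Unset Strict Implicit. Unset Printing Implicit Defensive.
Import Order.TTheory GRing.Theory Num.Theory.
Local Open Scope ring_scope.

Lemma big_tuple_rcons (R : Type) (idx : R) (op : Monoid.com_law idx)
    (T : finType) (m : nat) (F : m.+1.-tuple T -> R) :
  \big[op/idx]_(w : m.+1.-tuple T) F w =
  \big[op/idx]_(w : m.-tuple T) \big[op/idx]_(d : T) F [tuple of rcons w d].
Proof.
rewrite pair_big /= (reindex (fun wd : m.-tuple T * T => [tuple of rcons wd.1 wd.2])) //.
exists (fun w : m.+1.-tuple T =>
  ([tuple of belast (thead w) (behead w)], last (thead w) (behead w))).
  move=> [w d] _; have /(congr1 val) /= := tuple_eta [tuple of rcons w d].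
  rewrite lastI => /rcons_inj [Ew Ed].
  by congr (_, _); first apply: val_inj.
move=> w _; apply: val_inj => /=.
by rewrite -lastI; have /(congr1 val) := tuple_eta w.
Qed.

Lemma sum_nat_eq_mulr (R : pzSemiRingType) (m n i : nat) (F : nat -> R) :
  \sum_(m <= j < n) (j == i)%:R * F j = if (m <= i < n)%N then F i else 0.
Proof.
rewrite -(@big_nat1_eq R 0 +%R) big_mkcond.
by apply: eq_bigr => j _; rewrite mulr_natl mulrb.
Qed.

Lemma big_nat_shift (R : nmodType) (K s : nat) (F : int -> nat -> R) :
  (forall z y, z < 0 -> F z y = 0) -> (forall z y, (K <= y)%N -> F z y = 0) ->
  \sum_(0 <= a < K) F a%:Z (a + s)%N = \sum_(0 <= a < K) F (a%:Z - s%:Z) a.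
Proof.
move=> F_lt0 F_geK.
have -> : \sum_(0 <= a < K) F (a%:Z - s%:Z) a = \sum_(0 <= a < K + s) F (a%:Z - s%:Z) a.
  rewrite (@big_cat_nat _ _ _ K 0 (K + s)) ?leq_addr //= [X in _ = _ + X]big_nat_cond.
  by rewrite [X in _ = _ + X]big1 ?addr0 // => a /andP [/andP [le_Ka _] _]; apply: F_geK.
rewrite (@big_cat_nat _ _ _ s 0 (K + s)) ?leq_addl //= [X in _ = X + _]big_nat_cond.
rewrite [X in _ = X + _]big1 ?add0r => [|a /andP [/andP [_ lt_as] _]]; last first.
  by apply: F_lt0; lia.
rewrite (big_addn 0 _ s) addnK.
by apply: eq_bigr => a _; rewrite PoszD addrK.
Qed.

Lemma big_nat2_shift (R : pzSemiRingType) (K s t : nat)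
    (Phi : int -> int -> R) (Psi : nat -> nat -> R) :
  (forall x y, (x < 0) || (y < 0) -> Phi x y = 0) ->
  (forall x y, (K <= x)%N || (K <= y)%N -> Psi x y = 0) ->
  \sum_(0 <= a < K) \sum_(0 <= b < K) Phi a%:Z b%:Z * Psi (a + s)%N (b + t)%N =
  \sum_(0 <= a < K) \sum_(0 <= b < K) Phi (a%:Z - s%:Z) (b%:Z - t%:Z) * Psi a b.
Proof.
move=> Phi_lt0 Psi_geK.
transitivity (\sum_(0 <= a < K) \sum_(0 <= b < K) Phi a%:Z (b%:Z - t%:Z) * Psi (a + s)%N b).
  apply: eq_bigr => a _.
  apply: (@big_nat_shift _ K t (fun z y => Phi a%:Z z * Psi (a + s)%N y))
    => [z y z_lt0 | z y le_Ky].
    by rewrite Phi_lt0 ?mul0r // z_lt0 orbT.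
  by rewrite Psi_geK ?mulr0 // le_Ky orbT.
rewrite exchange_big [RHS]exchange_big /=; apply: eq_bigr => b _.
apply: (@big_nat_shift _ K s (fun z x => Phi z (b%:Z - t%:Z) * Psi x b))
  => [z y z_lt0 | z y le_Ky].
  by rewrite Phi_lt0 ?mul0r // z_lt0.
by rewrite Psi_geK ?mulr0 // le_Ky.
Qed.

Lemma posx_rcons (s : seq 'I_4) d : posx (rcons s d) = posx s + stepx d.
Proof. by rewrite /posx -cats1 big_cat big_seq1. Qed.

Lemma posy_rcons (s : seq 'I_4) d : posy (rcons s d) = posy s + stepy d.
Proof. by rewrite /posy -cats1 big_cat big_seq1. Qed.

Lemma in_quadrant_prefixes_rcons (m : nat) (w : m.-tuple 'I_4) d :
  [forall t : 'I_m.+2, in_quadrant (take t (rcons w d))] =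
  [forall t : 'I_m.+1, in_quadrant (take t w)] && in_quadrant (rcons w d).
Proof.
have size_wd : size (rcons w d) = m.+1 by rewrite size_rcons size_tuple.
have take_wd (t : nat) : (t <= m)%N -> take t (rcons w d) = take t w.
  by move=> le_tm; rewrite -cats1 takel_cat // size_tuple.
apply/forallP/andP => [Hw|[/forallP Hw Hwd] t].
  split; last by have := Hw ord_max; rewrite /= take_oversize ?size_wd.
  apply/forallP => t; have := Hw (widen_ord (leqnSn _) t).
  by rewrite /= take_wd // -ltnS.
have := ltn_ord t; rewrite ltnS leq_eqVlt => /orP [/eqP -> | lt_tm].
  by rewrite take_oversize ?size_wd.
by rewrite take_wd ?(Hw (Ordinal lt_tm)).
Qed.

Lemma good_walk_rcons m p q (w : m.-tuple 'I_4) d :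
  good_walk p q [tuple of rcons w d] =
  [&& 0 <= p, 0 <= q & good_walk (p - stepx d) (q - stepy d) w].
Proof.
rewrite /good_walk /= in_quadrant_prefixes_rcons /in_quadrant posx_rcons posy_rcons.
have subr_eqr (a b c : int) : (a == c - b) = (a + b == c).
  by rewrite eq_sym subr_eq eq_sym.
rewrite !subr_eqr.
case: (posx w + stepx d =P p) => [<-|]; case: (posy w + stepy d =P q) => [<-|];
  rewrite ?andbF //.
by case: [forall _, _]; case: (0 <= _); case: (0 <= _ + stepy d).
Qed.

Fixpoint nwalks (m : nat) (p q : int) : nat :=
  if m is m'.+1 then
    if (p < 0) || (q < 0) then 0%N
    else (\sum_(d < 4) nwalks m' (p - stepx d) (q - stepy d))%N
  else (p == 0) && (q == 0).

Arguments nwalks : simpl never.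

(* Walks of m + 1 steps ending at (p, q) whose first m + 1 positions stay in the
   quadrant; the endpoint itself may leave it. *)
Definition open_nwalks (m : nat) (p q : int) : nat :=
  (\sum_(d < 4) nwalks m (p - stepx d) (q - stepy d))%N.

Lemma open_nwalksE m p q : open_nwalks m p q =
  (nwalks m (p + 1) (q + 1) + nwalks m (p + 1) q +
   nwalks m (p - 1) q + nwalks m (p - 1) (q - 1))%N.
Proof.
rewrite /open_nwalks !big_ord_recr big_ord0 /= /stepx /stepy /= !opprK subr0 add0n.
by rewrite [LHS]addnC -!addnA; congr (_ + _)%N; rewrite addnCA.
Qed.

Lemma nwalks0 p q : nwalks 0 p q = (p == 0) && (q == 0).
Proof. by []. Qed.

Lemma nwalksS m p q :
  nwalks m.+1 p q = if (p < 0) || (q < 0) then 0%N else open_nwalks m p q.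
Proof. by []. Qed.

Lemma card_good_walk m p q :
  #|[set w : m.-tuple 'I_4 | good_walk p q w]| = nwalks m p q.
Proof.
rewrite -sum1dep_card big_mkcond /=.
elim: m p q => [|m IHm] p q.
  rewrite nwalks0 (eq_bigr (fun=> if good_walk p q [tuple] then 1%N else 0%N)); last first.
    by move=> w _; rewrite tuple0.
  rewrite sum_nat_const card_tuple card_ord expn0 mul1n /good_walk /= /posx /posy !big_nil.
  suff -> : [forall t : 'I_1, in_quadrant (take t [::])] by rewrite !(eq_sym 0).
  by apply/forallP => t; rewrite /in_quadrant /posx /posy !big_nil.
rewrite big_tuple_rcons nwalksS /open_nwalks /=.
under eq_bigr => w _ do under eq_bigr => d _ do rewrite good_walk_rcons.
rewrite !ltNge; case: (0 <= p); case: (0 <= q) => /=;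
  try by rewrite big1 // => w _; rewrite big1.
by rewrite exchange_big; apply: eq_bigr => d _; rewrite IHm.
Qed.

Lemma nwalks_lt0 m p q : (p < 0) || (q < 0) -> nwalks m p q = 0%N.
Proof.
case: m => [|m] neg_pq; last by rewrite nwalksS neg_pq.
by rewrite nwalks0; case/orP: neg_pq => /lt_eqF ->; rewrite ?andbF.
Qed.

Lemma nwalks_ltx m p q : p < 0 -> nwalks m p q = 0%N.
Proof. by move=> neg_p; rewrite nwalks_lt0 ?neg_p. Qed.

Lemma nwalks_lty m p q : q < 0 -> nwalks m p q = 0%N.
Proof. by move=> neg_q; rewrite nwalks_lt0 ?neg_q ?orbT. Qed.

Lemma F_nwalks (m : nat) p q : F m p q = nwalks m p q.
Proof.
rewrite /F ltz_nat ltn0 /=; case: ifP => [neg_pq|_]; last exact: card_good_walk.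
by rewrite nwalks_lt0.
Qed.

Lemma F_lt0 m p q : m < 0 -> F m p q = 0%N.
Proof. by rewrite /F => ->. Qed.

Lemma f_minn0 i j : minn i j = 0%N -> f i j = 0%N.
Proof.
by rewrite /f; case: leqP => _ min0; [rewrite /Ft_y !F_lt0 | rewrite /Ft_x F_lt0]; lia.
Qed.

Lemma f_le i j : (i < j)%N ->
  f i.+1 j = (nwalks i 0 (j%:Z - i.+1%:Z) + nwalks i 0 (j%:Z - i.+2%:Z))%N.
Proof.
move=> lt_ij; rewrite /f ifT // /Ft_y (_ : i.+1%:Z - 1 = i) ?F_nwalks; last by lia.
by congr (nwalks _ _ _ + nwalks _ _ _)%N; lia.
Qed.

Lemma f_gt i j : (j.+1 < i)%N -> f i j.+1 = nwalks j (i%:Z - j.+1%:Z) 0.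
Proof.
move=> lt_ji; rewrite /f ifF; last by apply/negbTE; lia.
rewrite /Ft_x (_ : j.+1%:Z - 1 = j) ?F_nwalks; last by lia.
by congr nwalks; lia.
Qed.

Lemma open_nwalks_boundary m (a b : nat) :
  open_nwalks m (a%:Z - m.+2%:Z) (b%:Z - m.+2%:Z) =
  (nwalks m.+1 (a%:Z - m.+2%:Z) (b%:Z - m.+2%:Z) + (minn a b == m.+1) * f a b)%N.
Proof.
case: (boolP ((a%:Z - m.+2%:Z < 0) || (b%:Z - m.+2%:Z < 0))) => [out|inside]; last first.
  by rewrite nwalksS (negbTE inside) (_ : minn a b == m.+1 = false) ?addn0 //; lia.
rewrite nwalks_lt0 // add0n open_nwalksE.
case: (leqP a m) => [le_am | lt_ma].
  have min_ne : minn a b != m.+1 by lia.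
  by rewrite (negbTE min_ne) !nwalks_lt0 //; apply/orP; left; lia.
case: (leqP b m) => [le_bm | lt_mb].
  have min_ne : minn a b != m.+1 by lia.
  by rewrite (negbTE min_ne) !nwalks_lt0 //; apply/orP; right; lia.
case: (eqVneq a m.+1) => [-> | ne_am1].
  have -> : minn m.+1 b == m.+1 by lia.
  have neg_x : m.+1%:Z - m.+2%:Z - 1 < 0 by lia.
  rewrite mul1n f_le // !(@nwalks_ltx m _ _ neg_x) !addn0.
  by congr (nwalks _ _ _ + nwalks _ _ _)%N; lia.
have -> : b = m.+1 by case/orP: out; lia.
have -> : minn a m.+1 == m.+1 by lia.
rewrite mul1n f_gt; last by lia.
have neg_y : m.+1%:Z - m.+2%:Z < 0 by lia.
have neg_y1 : m.+1%:Z - m.+2%:Z - 1 < 0 by lia.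
rewrite !(@nwalks_lty m _ _ neg_y) !(@nwalks_lty m _ _ neg_y1) !addn0.
by congr nwalks; lia.
Qed.

Lemma gbinom_lt0 a k : k < 0 -> gbinom a k = 0.
Proof. by rewrite /gbinom => ->. Qed.

Lemma gbinomr0 a : gbinom a 0 = 1.
Proof. by rewrite /gbinom /= big_ord0 divr1. Qed.

Lemma gbinom0n k : gbinom 0 k = (k == 0)%:R.
Proof.
case: k => [[|n]|n]; first exact: gbinomr0; last exact: gbinom_lt0.
by rewrite /gbinom /= big_ord_recl /= subr0 !mul0r.
Qed.

Lemma gbinomD1 a k : gbinom (a + 1) k = gbinom a k + gbinom a (k - 1).
Proof.
case: k => [[|n]|n]; last by rewrite !gbinom_lt0 ?addr0 //; lia.
  by rewrite !gbinomr0 gbinom_lt0 ?addr0.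
rewrite (_ : n.+1%:Z - 1 = n); last by lia.
rewrite /gbinom /= big_ord_recl big_ord_recr /= factS natrM subr0.
have -> : \prod_(l < n) ((a + 1 - (bump 0 l)%:Z)%:~R : rat) = \prod_(l < n) (a - l%:Z)%:~R.
  by apply: eq_bigr => l _; congr intr; rewrite /bump add1n; lia.
set P := \prod_(l < n) _.
have fact_neq0 : n`!%:R != 0 :> rat by rewrite pnatr_eq0 -lt0n fact_gt0.
have Sn_neq0 : n.+1%:R != 0 :> rat by rewrite pnatr_eq0.
rewrite !rmorphB !rmorphD /= -[n.+1%:R]natr1 in Sn_neq0 *.
by field; rewrite fact_neq0 Sn_neq0.
Qed.

Definition cm (m u v i j : nat) : rat :=
  if odd i == odd u then
    let h : int := ((u%:Z - i%:Z) %/ 2)%Z in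
    gbinom (- m%:Z) h * gbinom (- m%:Z) (v%:Z - j%:Z - h)
  else 0.

Lemma c_cm u v i j : c u v i j = cm (minn i j) u v i j.
Proof. by []. Qed.

Lemma cm_eq0 m u v i j : (u < i)%N || (v < j)%N -> cm m u v i j = 0.
Proof.
rewrite /cm; case: ifP => // _; set h := ((u%:Z - i%:Z) %/ 2)%Z.
case: (ltnP u i) => [lt_ui | le_iu] /= lt_vj.
  by rewrite gbinom_lt0 ?mul0r // /h ltNge divz_ge0 // subr_ge0 lez_nat -ltnNge.
have h_ge0 : 0 <= h by rewrite divz_ge0 // subr_ge0 lez_nat.
by rewrite (@gbinom_lt0 _ (v%:Z - j%:Z - h)) ?mulr0 //; lia.
Qed.

Lemma cm_diag m u v : cm m u v u v = 1.
Proof. by rewrite /cm eqxx !subrr div0z gbinomr0 mulr1. Qed.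

Lemma cm_pascal m u v i j :
  cm m.+1 u v i j + cm m.+1 u v i j.+1 +
  cm m.+1 u v i.+2 j.+1 + cm m.+1 u v i.+2 j.+2 = cm m u v i j.
Proof.
rewrite /cm /= negbK; case: (odd i == odd u); last by rewrite !addr0.
rewrite (_ : u%:Z - i.+2%:Z = (-1) * 2 + (u%:Z - i%:Z)); last by lia.
rewrite divzMDl //.
set h := ((u%:Z - i%:Z) %/ 2)%Z; set k := v%:Z - j%:Z - h.
have -> : v%:Z - j.+1%:Z - h = k - 1 by rewrite /k; lia.
have -> : v%:Z - j.+1%:Z - (-1 + h) = k by rewrite /k; lia.
have -> : v%:Z - j.+2%:Z - (-1 + h) = k - 1 by rewrite /k; lia.
have -> : -1 + h = h - 1 by rewrite addrC.
have -> : - m%:Z = - m.+1%:Z + 1 by lia.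
rewrite !gbinomD1; ring.
Qed.

Lemma cm0_11 u v : cm 0 u v 1 1 = ((u == 1%N) && (v == 1%N))%:R.
Proof.
rewrite /cm oppr0 !gbinom0n /=.
case: (boolP (odd u)) => [odd_u | even_u]; last first.
  by case: (u =P 1%N) even_u => [->|].
have -> : u = (u./2).*2.+1 by rewrite -[LHS]odd_double_half odd_u add1n.
set k := u./2 => /=.
rewrite (_ : k.*2.+1%:Z - 1 = k%:Z * 2) ?mulzK //; last by lia.
case: k => [|k]; last by rewrite mul0r.
by rewrite mul1r; congr (nat_of_bool _)%:R; apply/eqP/eqP; lia.
Qed.

Section RowIdentity.

Variables u v K : nat.
Hypotheses (lt_uK : (u < K)%N) (lt_vK : (v < K)%N).

Definition walk_pairing (m : nat) : rat := \sum_(0 <= i < K) \sum_(0 <= j < K)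
  (nwalks m (i%:Z - m.+1%:Z) (j%:Z - m.+1%:Z))%:R * cm m u v i j.

Definition boundary_pairing (m : nat) : rat := \sum_(0 <= i < K) \sum_(0 <= j < K)
  ((minn i j == m.+1) * f i j)%:R * cm m.+1 u v i j.

Lemma boundary_pairingE m : boundary_pairing m = walk_pairing m - walk_pairing m.+1.
Proof.
pose Phi (x y : int) : rat := (nwalks m (x - m.+1%:Z) (y - m.+1%:Z))%:R.
have Phi_lt0 x y : (x < 0) || (y < 0) -> Phi x y = 0.
  move=> neg_xy; rewrite /Phi nwalks_lt0 //.
  by case/orP: neg_xy => ?; apply/orP; [left|right]; lia.
have cm_geK x y : (K <= x)%N || (K <= y)%N -> cm m.+1 u v x y = 0.
  move=> out_xy; rewrite cm_eq0 //.
  by case/orP: out_xy => ?; apply/orP; [left|right]; lia.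
have -> : walk_pairing m = \sum_(0 <= i < K) \sum_(0 <= j < K)
    (Phi i j * cm m.+1 u v (i + 0) (j + 0) + Phi i j * cm m.+1 u v (i + 0) (j + 1) +
     Phi i j * cm m.+1 u v (i + 2) (j + 1) + Phi i j * cm m.+1 u v (i + 2) (j + 2)).
  apply: eq_bigr => i _; apply: eq_bigr => j _.
  by rewrite -!mulrDr !addn0 !addn1 !addn2 cm_pascal.
under eq_bigr => i _ do rewrite !big_split /=.
rewrite !big_split /= !big_nat2_shift // -!big_split /=.
rewrite /walk_pairing /boundary_pairing -sumrB.
apply: eq_bigr => i _; rewrite -!big_split -sumrB /=; apply: eq_bigr => j _.
rewrite -!mulrDl -mulrBl; congr (_ * _).
rewrite /Phi -!natrD.
rewrite [X in X%:R - _](_ : _ = open_nwalks m (i%:Z - m.+2%:Z) (j%:Z - m.+2%:Z)); last first.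
  by rewrite open_nwalksE; congr (_ + _ + _ + _)%N; congr nwalks; lia.
by rewrite open_nwalks_boundary natrD addrAC subrr add0r.
Qed.

Lemma walk_pairing0 : (1 < K)%N -> walk_pairing 0 = ((u == 1%N) && (v == 1%N))%:R.
Proof.
move=> lt_1K; rewrite -cm0_11.
transitivity (\sum_(0 <= i < K) (i == 1%N)%:R *
                \sum_(0 <= j < K) (j == 1%N)%:R * cm 0 u v i j).
  apply: eq_bigr => i _; rewrite big_distrr /=; apply: eq_bigr => j _.
  rewrite nwalks0 mulrA -natrM mulnb; congr ((nat_of_bool _)%:R * _).
  by congr (_ && _); apply/eqP/eqP; lia.
by rewrite sum_nat_eq_mulr /= lt_1K sum_nat_eq_mulr /= lt_1K.
Qed.

Lemma walk_pairing_u : walk_pairing u = 0.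
Proof.
apply: big1 => i _; apply: big1 => j _.
have [lt_ui | le_iu] := ltnP u i; first by rewrite cm_eq0 ?lt_ui ?mulr0.
by rewrite nwalks_lt0 ?mul0r //; apply/orP; left; lia.
Qed.

Lemma row_identity_box : (1 < K)%N ->
  \sum_(0 <= i < K) \sum_(0 <= j < K) c u v i j * (f i j)%:R =
  ((u == 1%N) && (v == 1%N))%:R.
Proof.
move=> lt_1K; rewrite -walk_pairing0 //.
have <- : \sum_(0 <= m < u) boundary_pairing m = walk_pairing 0.
  rewrite (@telescope_sumr_eq _ 0 u (fun m => - walk_pairing m)) // => [|m _].
    by rewrite walk_pairing_u oppr0 sub0r opprK.
  by rewrite boundary_pairingE opprK addrC.
rewrite /boundary_pairing [RHS]exchange_big; apply: eq_bigr => i _.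
rewrite [RHS]exchange_big; apply: eq_bigr => j _.
rewrite c_cm; case min_ij: (minn i j) => [|k].
  by rewrite f_minn0 // mulr0 big1 // => m _; rewrite muln0 mul0r.
under eq_bigr => m _ do rewrite eqSS eq_sym natrM -mulrA.
rewrite sum_nat_eq_mulr /= mulrC; case: ltnP => // le_uk.
by rewrite cm_eq0 ?mulr0 //; apply/orP; left; lia.
Qed.

End RowIdentity.

Section MonotoneEnumeration.

Variables (rho : nat * nat -> nat) (rhoinv : nat -> nat * nat).
Hypotheses (rhoK : cancel rho rhoinv) (rhoinvK : cancel rhoinv rho).
Hypothesis rho_mono : forall a b c d : nat, (a <= c)%N -> (b <= d)%N ->
  (rho (a, b) <= rho (c, d))%N.

Lemma rhoinv_le k n : ((rhoinv k).1 <= (rhoinv n).1)%N ->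
  ((rhoinv k).2 <= (rhoinv n).2)%N -> (k <= n)%N.
Proof.
by move=> le1 le2; have := rho_mono le1 le2; rewrite -!surjective_pairing !rhoinvK.
Qed.

Lemma big_rhoinv (R : pzSemiRingType) (n K : nat) (g : nat -> nat -> R) :
  (forall i j, ((rhoinv n).1 < i)%N || ((rhoinv n).2 < j)%N -> g i j = 0) ->
  ((rhoinv n).1 < K)%N -> ((rhoinv n).2 < K)%N ->
  \sum_(0 <= k < n.+1) g (rhoinv k).1 (rhoinv k).2 =
  \sum_(0 <= i < K) \sum_(0 <= j < K) g i j.
Proof.
move=> g_out lt_uK lt_vK; pose G k := g (rhoinv k).1 (rhoinv k).2.
transitivity (\sum_(0 <= i < K) \sum_(0 <= j < K)
                \sum_(0 <= k < n.+1) (k == rho (i, j))%:R * G k); last first.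
  apply: eq_bigr => i _; apply: eq_bigr => j _.
  rewrite sum_nat_eq_mulr /G rhoK /=; case: ltnP => // lt_n_rho.
  rewrite g_out //; apply: contraLR lt_n_rho; rewrite negb_or -!leqNgt => /andP [le_i le_j].
  by have := rho_mono le_i le_j; rewrite -surjective_pairing rhoinvK.
rewrite [RHS]exchange_big /=; under [RHS]eq_bigr => i _ do rewrite exchange_big /=.
rewrite [RHS]exchange_big /=; apply: eq_bigr => k _.
have rho_eq i j : (k == rho (i, j)) = (i == (rhoinv k).1) && (j == (rhoinv k).2).
  apply/eqP/andP => [->|[/eqP -> /eqP ->]]; first by rewrite rhoK.
  by rewrite -surjective_pairing rhoinvK.
under eq_bigr => i _ do under eq_bigr => j _ do rewrite rho_eq -mulnb natrM -mulrA.
case: (ltnP (rhoinv k).1 K) => [lt1K | le_K1]; last first.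
  have Gk0 : G k = 0 by apply: g_out; rewrite (leq_trans lt_uK le_K1).
  by rewrite -/(G k) Gk0 big1 // => i _; rewrite big1 // => j _; rewrite !mulr0.
case: (ltnP (rhoinv k).2 K) => [lt2K | le_K2]; last first.
  have Gk0 : G k = 0 by apply: g_out; rewrite (leq_trans lt_vK le_K2) orbT.
  by rewrite -/(G k) Gk0 big1 // => i _; rewrite big1 // => j _; rewrite !mulr0.
under eq_bigr => i _ do rewrite sum_nat_eq_mulr /= lt1K.
by rewrite sum_nat_eq_mulr /= lt2K.
Qed.

End MonotoneEnumeration.

Theorem corollary5 (rho : nat * nat -> nat) (rhoinv : nat -> nat * nat)
  (rhoK : cancel rho rhoinv) (rhoinvK : cancel rhoinv rho)
  (rho_mono : forall a b c d : nat, (a <= c)%N -> (b <= d)%N ->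
                (rho (a, b) <= rho (c, d))%N) :
  ((forall n k : nat, (n < k)%N -> Amat rhoinv n k = 0) /\
   (forall n : nat, Amat rhoinv n n = 1)) /\
  (forall n : nat, exists N : nat,
     (forall k : nat, (N <= k)%N -> Amat rhoinv n k * xvec rhoinv k = 0) /\
     \sum_(k < N) Amat rhoinv n k * xvec rhoinv k = bvec rhoinv n).
Proof.
have Amat_lt n k : (n < k)%N -> Amat rhoinv n k = 0.
  move=> lt_nk; rewrite /Amat c_cm cm_eq0 //; apply: contraLR lt_nk.
  by rewrite negb_or -!leqNgt => /andP [le1 le2]; apply: (rhoinv_le rhoinvK rho_mono).
split; first by split=> // n; rewrite /Amat c_cm cm_diag.
move=> n; exists n.+1; split=> [k lt_nk|]; first by rewrite Amat_lt ?mul0r.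
set u := (rhoinv n).1; set v := (rhoinv n).2.
rewrite -(big_mkord xpredT (fun k => Amat rhoinv n k * xvec rhoinv k)).
rewrite (big_rhoinv rhoK rhoinvK rho_mono (K := u + v + 2)
           (g := fun i j => c u v i j * (f i j)%:R)) /=.
- by rewrite row_identity_box /bvec; [case: (_ && _) | lia..].
- by move=> i j out_ij; rewrite c_cm cm_eq0 ?mul0r.
- by rewrite -/u; lia.
- by rewrite -/v; lia.
Qed.
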